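(* There is an absolute constant $C>0$ such that for every finite graph $G=(V,E)$ with maximum degree $\Delta$ and every $r\in\mathbb{N}$, $r\ge1$, every output $D$ of the algorithm Ratio on $(G,r)$ (for any tie-breaking) is an $r$-dominating set satisfying $$\overline{\mathrm{cong}}_r(D)\le C\cdot\max\bigl(1,\sqrt{\Delta^r}\bigr)\cdot \mathrm{mac}^r(G).$$ That is, Ratio is an $\mathcal{O}(\sqrt{\Delta^r})$-approximation algorithm for Minimum Congestion $r$-Dominating Set.
   Context: $N^r[v]$ is the set of vertices at distance at most $r$ from $v$, and $N^r[D]=\bigcup_{x\in D}N^r[x]$. $D$ is $r$-dominating if $N^r[D]=V$. The average $r$-congestion of $S$ is $\overline{\mathrm{cong}}_r(S)=\frac{1}{|V|}\sum_{v\in V}|N^r[v]\cap S|$, and $\mathrm{mac}^r(G)$ is its minimum over $r$-dominating sets. The algorithm Ratio starts with $D=\emptyset$ and, while $N^r[D]\ne V$, adds to $D$ a vertex $v$ maximizing $\frac{|N^r[v]\setminus N^r[D]|}{|N^r[v]|}$, breaking ties arbitrarily; it outputs $D$. *)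

From HB Require Import structures.
From mathcomp Require Import all_boot all_order all_algebra.
Set Implicit Arguments. Unset Strict Implicit. Unset Printing Implicit Defensive.
Import Order.TTheory GRing.Theory Num.Theory.

Section Defs.
Variable T : finType.
Variable e : rel T.

Definition simple_graph : Prop := symmetric e /\ irreflexive e.

Definition nbh_step (S : {set T}) : {set T} :=
  S :|: [set y | [exists x in S, e x y]].

Definition ball (r : nat) (v : T) : {set T} := iter r nbh_step [set v].

Definition ballset (r : nat) (D : {set T}) : {set T} :=
  \bigcup_(x in D) ball r x.

Definition r_dominating (r : nat) (D : {set T}) : bool := ballset r D == setT.

Definition max_degree : nat := \max_(v : T) #|[set u | e v u]|.

Definition avg_cong (R : numFieldType) (r : nat) (S : {set T}) : R :=
  (#|T|%:R)^-1 * \sum_(v : T) (#|ball r v :&: S|)%:R.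

(* mac^r(G): minimum over r-dominating sets (setT is r-dominating) *)
Definition mac (R : realFieldType) (r : nat) : R :=
  \big[Num.min/avg_cong R r setT]_(D : {set T} | r_dominating r D) avg_cong R r D.

Definition ratio_val (r : nat) (D : {set T}) (v : T) : rat :=
  (#|ball r v :\: ballset r D|)%:R / (#|ball r v|)%:R.

(* s is a possible run (sequence of chosen vertices, in order) of Ratio on
   (G, r), for some tie-breaking; the output is [set x in s]. *)
Definition ratio_run (r : nat) (s : seq T) : Prop :=
  (forall i, (i < size s)%N ->
     ~~ r_dominating r [set x in take i s] /\
     forall u : T, ratio_val r [set x in take i s] u
                   <= ratio_val r [set x in take i s] (nth u s i))%R
  /\ r_dominating r [set x in s].
End Defs.

From HB Require Import structures.
From mathcomp Require Import all_boot all_order all_algebra.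
Import Order.TTheory GRing.Theory Num.Theory.
From mathcomp Require Import zify ring lra.
Set Implicit Arguments. Unset Strict Implicit. Unset Printing Implicit Defensive.

(* Fix an r-dominating set D* and give each y in D* the weight
   |N^r[y]| * g(|N^r[y] \ N^r[D]|) with g(a) = 4 a^(1/4), where D is the
   current partial output of Ratio.  When Ratio picks x, covering N new
   vertices, the greedy choice gives |N^r[y] \ N^r[D]| / |N^r[y]| <= N / |N^r[x]|
   for every y, and the concavity bound a - b <= a (g(a) - g(b)) then shows
   that the total weight drops by at least |N^r[x]|.  Summing over the run,
   sum_(x in D) |N^r[x]| is at most the initial weight, which is at most
   max_y g(|N^r[y]|) * sum_(y in D* ) |N^r[y]|.  Double counting turns these
   sums into n times the average congestions, and g(|N^r[y]|) = O(sqrt(Delta^r))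
   because |N^r[y]| <= (Delta + 1)^r <= Delta^(2r) once Delta >= 2. *)

Lemma card_bigcup_le (T : finType) (I : Type) (s : seq I) (P : pred I)
    (A : I -> {set T}) :
  #|\bigcup_(i <- s | P i) A i| <= \sum_(i <- s | P i) #|A i|.
Proof.
elim/big_rec2: _ => [|i X n _ IH]; first by rewrite cards0.
by apply: leq_trans (leq_card_setU _ _) _; rewrite leq_add2l.
Qed.

Section Balls.
Variables (T : finType) (e : rel T).
Implicit Types (X Y D : {set T}) (u v x y : T).

Lemma in_nbh_step X u : (u \in nbh_step e X) = (u \in X) || [exists x in X, e x u].
Proof. by rewrite !inE. Qed.

Lemma sub_nbh_step X : X \subset nbh_step e X.
Proof. by apply/subsetP=> u uX; rewrite in_nbh_step uX. Qed.

Lemma nbh_stepS X Y : X \subset Y -> nbh_step e X \subset nbh_step e Y.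
Proof.
move=> /subsetP XY; apply/subsetP=> u; rewrite !in_nbh_step => /orP[/XY->//|].
by case/existsP=> x /andP[/XY xY exu]; apply/orP; right; apply/existsP; exists x; rewrite xY.
Qed.

Lemma ballS r v : ball e r.+1 v = nbh_step e (ball e r v).
Proof. by []. Qed.

Lemma ball_refl r v : v \in ball e r v.
Proof.
elim: r => [|r IH]; first by rewrite inE.
by rewrite ballS (subsetP (sub_nbh_step _)).
Qed.

Lemma card_ball_gt0 r v : 0 < #|ball e r v|.
Proof. by apply/card_gt0P; exists v; apply: ball_refl. Qed.

Lemma ball_edge r u x : e u x -> ball e r x \subset ball e r.+1 u.
Proof.
move=> eux; elim: r => [|r IH]; last by rewrite ballS [ball e r.+2 u]ballS nbh_stepS.
apply/subsetP=> y; rewrite inE => /eqP->; rewrite in_nbh_step.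
by apply/orP; right; apply/existsP; exists u; rewrite inE eqxx.
Qed.

Lemma ball_sym r u v : symmetric e -> u \in ball e r v -> v \in ball e r u.
Proof.
move=> sym; elim: r u v => [|r IH] u v; first by rewrite !inE => /eqP->.
rewrite ballS in_nbh_step => /orP[/IH vu|]; first by rewrite ballS (subsetP (sub_nbh_step _)).
case/existsP=> x /andP[/IH vx exu].
by apply: (subsetP (ball_edge r _)) vx; rewrite sym.
Qed.

Lemma card_nbr_le v : #|[set u | e v u]| <= max_degree e.
Proof. exact: (@leq_bigmax T (fun v => #|[set u | e v u]|)). Qed.

Lemma card_nbh_step_le X : #|nbh_step e X| <= (max_degree e).+1 * #|X|.
Proof.
have -> : nbh_step e X = X :|: \bigcup_(x in X) [set u | e x u].
  apply/setP=> u; rewrite in_nbh_step !inE; congr (_ || _).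
  apply/existsP/bigcupP => [[x /andP[xX exu]]|[x xX]]; first by exists x; rewrite ?inE.
  by rewrite inE => exu; exists x; rewrite xX.
apply: leq_trans (leq_card_setU _ _) _; rewrite mulSn leq_add2l.
apply: leq_trans (card_bigcup_le _ _ _) _.
by rewrite -sum1_card big_distrr /= leq_sum // => x _; rewrite muln1 card_nbr_le.
Qed.

Lemma card_ball_le r v : #|ball e r v| <= (max_degree e).+1 ^ r.
Proof.
elim: r => [|r IH]; first by rewrite cards1.
by rewrite ballS expnS; apply: leq_trans (card_nbh_step_le _) _; rewrite leq_mul2l IH orbT.
Qed.

(* Here (Delta + 1)^r is no bound at all; instead, in a matching every ball
   is the closed neighbourhood of its centre. *)
Lemma card_ball_le2 r v : symmetric e -> max_degree e <= 1 -> #|ball e r v| <= 2.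
Proof.
move=> sym Delta_le1.
have closed1 : nbh_step e (ball e 1 v) \subset ball e 1 v.
  apply/subsetP=> y; rewrite in_nbh_step => /orP[//|/existsP[x /andP[]]].
  rewrite ballS in_nbh_step inE => /orP[/eqP-> evy|].
    by rewrite in_nbh_step; apply/orP; right; apply/existsP; exists v; rewrite inE eqxx.
  case/existsP=> w /andP[]; rewrite inE => /eqP-> evx exy.
  have /card_le1_eqP yv : #|[set u | e x u]| <= 1 by apply: leq_trans (card_nbr_le x) _.
  have -> : y = v by apply: yv; rewrite inE // sym.
  exact: (ball_refl 1).
have sub1 : ball e r v \subset ball e 1 v.
  elim: r => [|r IH]; first exact: sub_nbh_step.
  by rewrite ballS (subset_trans (nbh_stepS IH)).
by apply: leq_trans (subset_leq_card sub1) (leq_trans (card_ball_le 1 v) _); rewrite expn1.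
Qed.

Lemma in_ballset r D u : reflect (exists2 x, x \in D & u \in ball e r x) (u \in ballset e r D).
Proof. exact: bigcupP. Qed.

Lemma ballset0 r : ballset e r set0 = set0.
Proof. by rewrite /ballset big_set0. Qed.

Lemma ballset_rcons r (l : seq T) x :
  ballset e r [set y in rcons l x] = ballset e r [set y in l] :|: ball e r x.
Proof.
apply/setP=> u; rewrite inE; apply/in_ballset/orP.
  case=> y; rewrite inE mem_rcons inE => /orP[/eqP->|yl] uy; first by right.
  by left; apply/in_ballset; exists y; rewrite ?inE.
case=> [/in_ballset[y yl uy]|ux]; last by exists x; rewrite // inE mem_rcons mem_head.
by exists y; rewrite // inE mem_rcons inE; rewrite inE in yl; rewrite yl orbT.
Qed.

Lemma r_dominatingT r : r_dominating e r setT.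
Proof.
by apply/eqP/setP=> u; rewrite inE; apply/in_ballset; exists u; rewrite ?inE ?ball_refl.
Qed.

Lemma sum_card_ballI r D : symmetric e ->
  \sum_v #|ball e r v :&: D| = \sum_(x in D) #|ball e r x|.
Proof.
move=> sym.
have cardI v : #|ball e r v :&: D| = \sum_(x in D) (x \in ball e r v).
  rewrite -sum1_card big_mkcond [RHS]big_mkcond /=.
  by apply: eq_bigr => x _; rewrite inE andbC; case: (x \in D).
rewrite (eq_bigr _ (fun v _ => cardI v)) exchange_big /=; apply: eq_bigr => x _.
rewrite -sum1_card [RHS]big_mkcond /=; apply: eq_bigr => v _.
by congr nat_of_bool; apply/idP/idP; apply: ball_sym.
Qed.

End Balls.

Local Open Scope ring_scope.

Section Weight.
Variable R : rcfType.

Definition weight (a : nat) : R := 4 * Num.sqrt (Num.sqrt a%:R).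

Lemma weight_ge0 a : 0 <= weight a.
Proof. by rewrite mulr_ge0 ?sqrtr_ge0. Qed.

Lemma ler_weight a b : (a <= b)%N -> weight a <= weight b.
Proof. by move=> ab; rewrite ler_pM2l //; do 2 apply: ler_wsqrtr; rewrite ler_nat. Qed.

Lemma weight_sqr n : weight (n ^ 2) = 4 * Num.sqrt n%:R.
Proof. by rewrite /weight natrX sqrtr_sqr ger0_norm ?sqrtr_ge0. Qed.

Lemma weight_le8 a : (a <= 16)%N -> weight a <= 8.
Proof.
move=> a16; apply: le_trans (ler_weight (a16 : (a <= 4 ^ 2)%N)) _.
have sqrt4 : Num.sqrt (4 : R) = 2.
  by rewrite (_ : 4 = 2 ^+ 2) ?sqrtr_sqr ?ger0_norm // expr2; lra.
by rewrite weight_sqr sqrt4; lra.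
Qed.

Lemma weight_increment a b : (b <= a)%N -> a%:R - b%:R <= a%:R * (weight a - weight b).
Proof.
move=> ba; have [a0|a_gt0] := posnP a.
  by move: ba; rewrite a0 leqn0 => /eqP->; rewrite subrr mul0r.
have root4 n : Num.sqrt (Num.sqrt n%:R : R) ^+ 4 = n%:R.
  by rewrite (exprM _ 2 2) !sqr_sqrtr ?sqrtr_ge0 ?ler0n.
set s := Num.sqrt (Num.sqrt a%:R : R); set t := Num.sqrt (Num.sqrt b%:R : R).
have t0 : 0 <= t by apply: sqrtr_ge0.
have ts : t <= s by do 2 apply: ler_wsqrtr; rewrite ler_nat.
have s1 : 1 <= s
  by rewrite -{1}sqrtr1 ler_sqrt ?sqrtr_ge0 // -{1}sqrtr1 ler_sqrt ?ler1n.
rewrite /weight -/s -/t -(root4 a) -(root4 b) -/s -/t.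
have factor : s ^+ 4 - t ^+ 4 = (s - t) * ((s + t) * (s ^+ 2 + t ^+ 2)) by ring.
have bound : (s + t) * (s ^+ 2 + t ^+ 2) <= 4 * s ^+ 4.
  have sum_le : s + t <= 2 * s by lra.
  have sqr_le : s ^+ 2 + t ^+ 2 <= 2 * s ^+ 2 by nra.
  apply: le_trans (ler_pM _ _ sum_le sqr_le) _; [lra | nra |].
  have s3 : 0 <= s ^+ 3 by rewrite exprn_ge0 //; lra.
  nra.
rewrite factor; apply: le_trans (ler_wpM2l _ bound) _; first lra.
by rewrite [leRHS](_ : _ = (s - t) * (4 * s ^+ 4)) //; ring.
Qed.

Lemma weight_drop (a b wx wy n : nat) : (b <= a)%N -> (a * wx <= n * wy)%N ->
  wx%:R * (a - b)%N%:R <= n%:R * (wy%:R * weight a - wy%:R * weight b).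
Proof.
move=> ba greedy; have drop_ge0 : 0 <= weight a - weight b by rewrite subr_ge0 ler_weight.
rewrite natrB // -mulrBr mulrA.
apply: le_trans (ler_wpM2l (ler0n _ wx) (weight_increment ba)) _.
by rewrite mulrA -!natrM ler_wpM2r // ler_nat mulnC.
Qed.

End Weight.

Section Potential.
Variables (R : rcfType) (T : finType) (e : rel T) (r : nat).
Implicit Types (Ds W : {set T}) (x y : T).

Definition potential Ds W : R :=
  \sum_(y in Ds) #|ball e r y|%:R * weight R #|ball e r y :&: W|.

Lemma potential_ge0 Ds W : 0 <= potential Ds W.
Proof. by apply: sumr_ge0 => y _; rewrite mulr_ge0 ?weight_ge0. Qed.

Lemma weight_card_ball_le y : symmetric e ->
  weight R #|ball e r y| <= 8%:R * Num.max 1 (Num.sqrt ((max_degree e)%:R ^+ r)).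
Proof.
move=> sym; have [Delta_le1 | Delta_gt1] := leqP (max_degree e) 1.
  apply: le_trans (weight_le8 _ (leq_trans (card_ball_le2 r y sym Delta_le1) _)) _ => //.
  by rewrite ler_pMr // le_max lexx.
have ball_le : (#|ball e r y| <= (max_degree e ^ r) ^ 2)%N.
  apply: leq_trans (card_ball_le _ _ _) _; rewrite -expnM mulnC expnM.
  have Delta_sq : ((max_degree e).+1 <= max_degree e ^ 2)%N by rewrite -mulnn; nia.
  by elim: (r) => // k IH; rewrite !(expnS _ k) leq_mul.
apply: le_trans (ler_weight _ ball_le) _; rewrite weight_sqr natrX.
set sqrtDelta := Num.sqrt ((max_degree e)%:R ^+ r : R).
have sqrt_le : sqrtDelta <= Num.max 1 sqrtDelta by rewrite le_max lexx orbT.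
have : 0 <= sqrtDelta by apply: sqrtr_ge0.
lra.
Qed.

Lemma potentialT_le Ds : symmetric e ->
  potential Ds setT <=
  8%:R * Num.max 1 (Num.sqrt ((max_degree e)%:R ^+ r)) * (\sum_(y in Ds) #|ball e r y|)%:R.
Proof.
move=> sym; rewrite natr_sum mulr_sumr; apply: ler_sum => y _.
by rewrite setIT mulrC ler_wpM2r ?ler0n ?weight_card_ball_le.
Qed.

(* The last hypothesis is Ratio's choice of [x] when [W] is the uncovered
   set, with the denominators cleared. *)
Lemma potential_drop Ds W x :
  r_dominating e r Ds -> (0 < #|ball e r x :&: W|)%N ->
  (forall y, #|ball e r y :&: W| * #|ball e r x| <= #|ball e r x :&: W| * #|ball e r y|)%N ->
  #|ball e r x|%:R <= potential Ds W - potential Ds (W :\: ball e r x).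
Proof.
move=> dom N_gt0 greedy; set N := #|ball e r x :&: W|; set wx := #|ball e r x|.
have cover : (N <= \sum_(y in Ds) #|ball e r y :&: (W :&: ball e r x)|)%N.
  apply: leq_trans (card_bigcup_le _ _ _); apply/subset_leq_card/subsetP=> u.
  rewrite inE => /andP[ux uW].
  have /in_ballset[y yD uy] : u \in ballset e r Ds by rewrite (eqP dom) inE.
  by apply/bigcupP; exists y; rewrite // !inE uy uW ux.
suff : N%:R * wx%:R <= N%:R * (potential Ds W - potential Ds (W :\: ball e r x)).
  by rewrite ler_pM2l ?ltr0n.
rewrite /potential -sumrB mulr_sumr.
apply: le_trans (_ : _ <= \sum_(y in Ds) wx%:R * #|ball e r y :&: (W :&: ball e r x)|%:R) _.
  by rewrite -mulr_sumr -natr_sum mulrC ler_wpM2l ?ler0n // ler_nat.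
apply: ler_sum => y _.
have -> : #|ball e r y :&: (W :&: ball e r x)|
          = (#|ball e r y :&: W| - #|ball e r y :&: (W :\: ball e r x)|)%N.
  by rewrite -(cardsID (ball e r x) (ball e r y :&: W)) setIA setIDA addnK.
apply: weight_drop; last exact: greedy.
by apply/subset_leq_card/setIS/subsetDl.
Qed.

End Potential.

Section RatioRun.
Variables (T : finType) (e : rel T) (r : nat) (s : seq T).
Hypothesis run : ratio_run e r s.

Lemma ratio_run_greedy i x0 y : (i < size s)%N ->
  (#|ball e r y :&: ~: ballset e r [set x in take i s]| * #|ball e r (nth x0 s i)|
   <= #|ball e r (nth x0 s i) :&: ~: ballset e r [set x in take i s]| * #|ball e r y|)%N.
Proof.
move=> lti; have [_ greedy] := run.1 i lti.
move: (greedy y); rewrite (set_nth_default x0 y lti) /ratio_val !setDE.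
rewrite ler_pdivrMr ?ltr0n ?card_ball_gt0 // mulrAC.
by rewrite ler_pdivlMr ?ltr0n ?card_ball_gt0 // -!natrM ler_nat.
Qed.

Lemma ratio_run_progress i x0 : (i < size s)%N ->
  (0 < #|ball e r (nth x0 s i) :&: ~: ballset e r [set x in take i s]|)%N.
Proof.
move=> lti; have [not_dom _] := run.1 i lti.
have /set0Pn[u uW] : ~: ballset e r [set x in take i s] != set0.
  by apply: contra not_dom => /eqP W0; rewrite /r_dominating -[ballset _ _ _]setCK W0 setC0.
have u_new : (0 < #|ball e r u :&: ~: ballset e r [set x in take i s]|
                  * #|ball e r (nth x0 s i)|)%N.
  by rewrite muln_gt0 card_ball_gt0 andbT; apply/card_gt0P; exists u; rewrite inE ball_refl uW.
by have := leq_trans u_new (ratio_run_greedy x0 u lti); rewrite muln_gt0 => /andP[].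
Qed.

Lemma ratio_run_fresh i x0 : (i < size s)%N -> nth x0 s i \notin take i s.
Proof.
move=> lti; apply/negP=> x_in; have := ratio_run_progress x0 lti.
rewrite card_gt0 => /set0Pn[u]; rewrite !inE => /andP[ux]; apply/negP; rewrite negbK.
by apply/in_ballset; exists (nth x0 s i); rewrite ?inE.
Qed.

Lemma ratio_run_uniq : uniq s.
Proof.
suff take_uniq k : (k <= size s)%N -> uniq (take k s) by rewrite -(take_size s) take_uniq.
elim: k => [|k IH] lt; first by rewrite take0.
have [x0 _] : {x0 : T | true} by move: lt; case: (s) => // x0; exists x0.
by rewrite (take_nth x0 lt) rcons_uniq ratio_run_fresh // IH // ltnW.
Qed.

Lemma ratio_run_telescope (R : rcfType) Ds k : r_dominating e r Ds -> (k <= size s)%N ->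
  \sum_(x <- take k s) #|ball e r x|%:R
  <= potential R e r Ds setT - potential R e r Ds (~: ballset e r [set x in take k s]).
Proof.
move=> dom; elim: k => [|k IH] lt.
  rewrite take0 big_nil (_ : [set x in [::]] = set0) ?ballset0 ?setC0 ?subrr //.
have [x0 _] : {x0 : T | true} by move: lt; case: (s) => // x0; exists x0.
rewrite (take_nth x0 lt) big_rcons /= ballset_rcons setCU -setDE.
have drop := potential_drop R dom (ratio_run_progress x0 lt) (ratio_run_greedy x0 ^~ lt).
have := lerD drop (IH (ltnW lt)); lra.
Qed.

Lemma ratio_run_approx (R : rcfType) Ds : symmetric e -> r_dominating e r Ds ->
  avg_cong e R r [set x in s]
  <= 8%:R * Num.max 1 (Num.sqrt ((max_degree e)%:R ^+ r)) * avg_cong e R r Ds.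
Proof.
move=> sym dom; rewrite /avg_cong -!natr_sum !sum_card_ballI // mulrCA.
rewrite ler_wpM2l ?invr_ge0 ?ler0n //; apply: le_trans (potentialT_le R r Ds sym).
rewrite (eq_bigl (mem s)) => [|x]; last by rewrite inE.
rewrite -big_uniq ?ratio_run_uniq // natr_sum.
have := ratio_run_telescope R dom (leqnn (size s)); rewrite take_size => telescope.
by apply: le_trans telescope _; rewrite gerBl potential_ge0.
Qed.

End RatioRun.

Lemma mac_attained (R : realFieldType) (T : finType) (e : rel T) r :
  exists2 D, r_dominating e r D & mac e R r = avg_cong e R r D.
Proof.
rewrite /mac; elim/big_rec: _ => [|D m dD [D' dD' ->]].
  by exists setT; rewrite ?r_dominatingT.
by rewrite minEle; case: ifP => _; [exists D | exists D'].
Qed.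

Theorem mainTheorem8 :
  exists C : nat, (0 < C)%N /\
  forall (R : rcfType) (T : finType) (e : rel T) (r : nat),
    simple_graph e -> (1 <= r)%N ->
    forall s : seq T, ratio_run e r s ->
      r_dominating e r [set x in s] /\
      (avg_cong e R r [set x in s]
        <= C%:R * Num.max 1 (Num.sqrt ((max_degree e)%:R ^+ r)) * mac e R r)%R.
Proof.
exists 8%N; split=> // R T e r [sym _] _ s run; split; first by case: run.
have [D dD ->] := mac_attained R e r.
exact: ratio_run_approx.
Qed.
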